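(* Let $X \subset \mathbb{R}^n$ be a compact real algebraic set. Then the topological disjoint union $X \sqcup X$ is a boundary; that is, there exist a real algebraic set $W \subset \mathbb{R}^m$ (for some $m$) and a point $w \in W$ such that $X \sqcup X$ is homeomorphic to the link $\operatorname{lk}(w,W)$.
   Context: All algebraic sets are algebraic subsets of real affine space $\mathbb{R}^m$. For a semialgebraic set $W \subset \mathbb{R}^m$ and $w \in W$, let $S(w,\varepsilon)$ denote the sphere of radius $\varepsilon>0$ in $\mathbb{R}^m$ centered at $w$. By the local conic structure lemma, for all sufficiently small $\varepsilon>0$ the topological type of $S(w,\varepsilon)\cap W$ is independent of $\varepsilon$; this space is called the link of $w$ in $W$ and denoted $\operatorname{lk}(w,W)$. A compact real algebraic set $X$ is called a boundary if there exist a real algebraic set $W$ and a point $w\in W$ such that $X$ is homeomorphic to $\operatorname{lk}(w,W)$. *)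

From HB Require Import structures.
From mathcomp Require Import all_boot all_order all_algebra.
From mathcomp Require Import all_classical all_reals all_analysis.
From mathcomp Require mpoly.
Set Implicit Arguments. Unset Strict Implicit. Unset Printing Implicit Defensive.
Import Order.TTheory GRing.Theory Num.Theory.
Import numFieldNormedType.Exports.
Local Open Scope classical_set_scope.
Local Open Scope ring_scope.

Definition coords (R : realType) (n : nat) (x : 'rV[R]_n) : 'I_n -> R :=
  fun i => x ord0 i.

Definition is_algebraic_set (R : realType) (n : nat) (X : set 'rV[R]_n) : Prop :=
  exists (k : nat) (ps : 'I_k -> mpoly.mpoly n R),
    X = [set x | forall j : 'I_k, mpoly.meval (coords x) (ps j) = 0].

Definition sphere (R : realType) (m : nat) (w : 'rV[R]_m) (eps : R) : set 'rV[R]_m :=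
  [set x | \sum_(i < m) (x ord0 i - w ord0 i) ^+ 2 = eps ^+ 2].

Definition homeomorphic (R : realType) (a b : nat)
  (A : set 'rV[R]_a) (B : set 'rV[R]_b) : Prop :=
  exists (f : 'rV[R]_a -> 'rV[R]_b) (g : 'rV[R]_b -> 'rV[R]_a),
    [/\ (forall x, A x -> B (f x)), (forall y, B y -> A (g y)),
        (forall x, A x -> g (f x) = x) & (forall y, B y -> f (g y) = y)] /\
    ({within A, continuous f} /\ {within B, continuous g}).

(* The topological disjoint union X ⊔ X, realised inside R^(n+1) as X × {0,1}. *)
Definition disjoint_union_self (R : realType) (n : nat) (X : set 'rV[R]_n)
  : set 'rV[R]_(n + 1) :=
  [set z | X (lsubmx z) /\ (rsubmx z = 0 \/ rsubmx z = const_mx 1)].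

(* Y is homeomorphic to the link lk(w, W): for all sufficiently small eps > 0,
   S(w, eps) ∩ W is homeomorphic to Y. *)
Definition homeomorphic_to_link (R : realType) (k m : nat) (Y : set 'rV[R]_k)
  (W : set 'rV[R]_m) (w : 'rV[R]_m) : Prop :=
  exists2 eps0 : R, 0 < eps0 &
    forall eps : R, 0 < eps -> eps < eps0 -> homeomorphic Y (sphere w eps `&` W).

Definition is_boundary (R : realType) (k : nat) (Y : set 'rV[R]_k) : Prop :=
  exists (m : nat) (W : set 'rV[R]_m) (w : 'rV[R]_m),
    [/\ is_algebraic_set W, W w & homeomorphic_to_link Y W w].

(* Homogenizing the equations of X in a new variable u gives an algebraic cone in
   R^(n+2) = {(y, u, r)} whose points with u <> 0 are those with y / u in X.  Cut it
   with the sphere |y|^2 + (u - 1/2)^2 + r^2 = 1/4, which passes through w = 0.  The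
   sphere of radius eps around 0 meets that sphere exactly in the hyperplane u = eps^2,
   so the link is the set of points (eps^2 x, eps^2, r) with x in X and
   r^2 = eps^2 - eps^4 - eps^4 |x|^2.  As X is bounded, the right-hand side is at least
   eps^4 for small eps, and the two signs of r give two disjoint copies of X. *)

From HB Require Import structures.
From mathcomp Require Import all_boot all_order all_algebra.
From mathcomp Require mpoly.
From mathcomp Require Import ring.

Set Implicit Arguments.
Unset Strict Implicit.
Unset Printing Implicit Defensive.

(* The notations of [mpoly] clash with those of MathComp-Analysis, so they are only
   imported inside this module, before the analysis libraries are. *)
Module Homogenization.
Import mpoly GRing.Theory.
Local Open Scope ring_scope.

Section Homogenization.
Variables (R : fieldType) (n m : nat) (iy : 'I_n -> 'I_m) (iu : 'I_m).

Definition dehomogenize (v : 'I_m -> R) : 'I_n -> R := fun i => v (iy i) / v iu.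

Definition homogenizable (p : {mpoly R[n]}) := exists (D : nat) (P : {mpoly R[m]}),
  forall v, v iu != 0 -> meval v P = v iu ^+ D * meval (dehomogenize v) p.

Lemma homogenizableD p q : homogenizable p -> homogenizable q -> homogenizable (p + q).
Proof.
move=> [D1 [P1 hP1]] [D2 [P2 hP2]].
exists (D1 + D2)%N, (P1 * 'X_iu ^+ D2 + P2 * 'X_iu ^+ D1) => v v0.
by rewrite !mevalD !mevalM !rmorphXn /= mevalXU hP1 // hP2 // exprD; ring.
Qed.

Lemma homogenizableM p q : homogenizable p -> homogenizable q -> homogenizable (p * q).
Proof.
move=> [D1 [P1 hP1]] [D2 [P2 hP2]].
by exists (D1 + D2)%N, (P1 * P2) => v v0; rewrite !mevalM hP1 // hP2 // exprD; ring.
Qed.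

Lemma homogenizableC c : homogenizable c%:MP.
Proof. by exists 0%N, c%:MP => v _; rewrite !mevalC expr0 mul1r. Qed.

Lemma homogenizableX i : homogenizable 'X_i.
Proof. by exists 1%N, 'X_(iy i) => v v0; rewrite !mevalXU expr1 mulrC divfK. Qed.

Lemma homogenizable_all p : homogenizable p.
Proof.
have hom1 : homogenizable 1 by rewrite -mpolyC1; apply: homogenizableC.
rewrite (mpolyE p); elim/big_rec: _ => [|mu q _ hq].
  by rewrite -mpolyC0; apply: homogenizableC.
apply: homogenizableD => //; rewrite -mul_mpolyC.
apply: homogenizableM; first exact: homogenizableC.
rewrite mpolyXE_id; elim/big_rec: _ => [//|i r _ hr].
apply: homogenizableM => //; elim: (mu i) => [//|e he].
by rewrite exprS; apply: homogenizableM => //; apply: homogenizableX.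
Qed.

Lemma cone_equations k (ps : 'I_k -> {mpoly R[n]}) :
  exists qs : 'I_k -> {mpoly R[m]}, forall v,
    (forall j, meval v (qs j) = 0) <->
    (v iu != 0 -> forall j, meval (dehomogenize v) (ps j) = 0).
Proof.
have /boolp.choice [DP hDP] := fun j => homogenizable_all (ps j).
have /boolp.choice [P hP] := hDP.
exists (fun j => P j * 'X_iu) => v; split.
- move=> hQ v0 j; have := hQ j; rewrite mevalM mevalXU hP // => /eqP.
  by rewrite !mulf_eq0 (negPf v0) expf_eq0 (negPf v0) andbF orbF /= => /eqP.
- move=> hX j; rewrite mevalM mevalXU.
  have [->|v0] := eqVneq (v iu) 0; first by rewrite mulr0.
  by rewrite hP // hX // !mulr0 mul0r.
Qed.

Definition sphere_poly (c : 'I_m -> R) (e : R) : {mpoly R[m]} :=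
  \sum_(i < m) ('X_i - (c i)%:MP) ^+ 2 - e%:MP.

Lemma meval_sphere_poly v c e :
  meval v (sphere_poly c e) = \sum_(i < m) (v i - c i) ^+ 2 - e.
Proof.
rewrite /sphere_poly rmorphB rmorph_sum /= mevalC.
by congr (_ - _); apply: eq_bigr => i _; rewrite rmorphXn rmorphB /= mevalXU mevalC.
Qed.

End Homogenization.
End Homogenization.

From mathcomp Require Import all_classical all_reals all_analysis.
From mathcomp Require Import lra.
Import numFieldNormedType.Exports.
Import Order.TTheory GRing.Theory Num.Theory.
Import Homogenization.
Local Open Scope classical_set_scope.
Local Open Scope ring_scope.

Section AlgebraicSets.
Variable R : realType.

Lemma algebraic_setI m (A B : set 'rV[R]_m) :
  is_algebraic_set A -> is_algebraic_set B -> is_algebraic_set (A `&` B).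
Proof.
move=> [k [ps ->]] [l [qs ->]].
exists (k + l)%N, (fun j => match fintype.split j with inl a => ps a | inr b => qs b end).
apply/seteqP; split=> x /=.
  by move=> [hA hB] j; case: (fintype.split j).
move=> h; split=> j.
  by have := h (unsplit (inl j)); rewrite unsplitK.
by have := h (unsplit (inr j)); rewrite unsplitK.
Qed.

Lemma algebraic_set_sphere m (w : 'rV[R]_m) eps : is_algebraic_set (sphere w eps).
Proof.
exists 1%N, (fun=> sphere_poly (coords w) (eps ^+ 2)).
apply/seteqP; split=> x /=.
  by move=> hx _; rewrite meval_sphere_poly hx subrr.
by move=> /(_ ord0); rewrite meval_sphere_poly => /eqP; rewrite subr_eq0 => /eqP.
Qed.

Lemma algebraic_set_dehomogenized n m (iy : 'I_n -> 'I_m) (iu : 'I_m) (X : set 'rV[R]_n) :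
  is_algebraic_set X ->
  is_algebraic_set [set z : 'rV[R]_m |
    z ord0 iu != 0 -> X (\row_i (z ord0 (iy i) / z ord0 iu))].
Proof.
move=> [k [ps ->]]; have [qs hqs] := cone_equations iy iu ps.
have coords_row (z : 'rV[R]_m) : coords (\row_i (z ord0 (iy i) / z ord0 iu)) =
    dehomogenize iy iu (coords z) by apply: funext => i; rewrite /coords mxE.
by exists k, qs; apply/seteqP; split=> z /=; rewrite hqs coords_row.
Qed.

End AlgebraicSets.

Definition sqnorm (R : realType) k (x : 'rV[R]_k) := \sum_(i < k) x ord0 i ^+ 2.

Section SquaredNorm.
Variable R : realType.

Lemma sqnorm_ge0 k (x : 'rV[R]_k) : 0 <= sqnorm x.
Proof. by apply: sumr_ge0 => i _; apply: sqr_ge0. Qed.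

Lemma sqnormZ k (c : R) (x : 'rV[R]_k) : sqnorm (c *: x) = c ^+ 2 * sqnorm x.
Proof. by rewrite /sqnorm mulr_sumr; apply: eq_bigr => i _; rewrite mxE exprMn. Qed.

Lemma sphereE m (w : 'rV[R]_m) eps : sphere w eps = [set z | sqnorm (z - w) = eps ^+ 2].
Proof.
apply: funext => z; rewrite /sphere /sqnorm /=.
by congr (_ = _); apply: eq_bigr => i _; rewrite !mxE.
Qed.

Lemma continuous_sqnorm k : continuous (@sqnorm R k).
Proof.
rewrite /sqnorm -fct_sumE; apply: (big_ind (fun f => continuous f)).
- exact: cst_continuous.
- by move=> f g hf hg x; apply: continuousD; [exact: hf | exact: hg].
- move=> i _ x.
  apply: (continuous_comp (f := fun z : 'rV[R]_k => z ord0 i) (g := fun r => r ^+ 2)).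
    exact: coord_continuous.
  exact: exprn_continuous.
Qed.

Lemma compact_sqnorm_bounded k (X : set 'rV[R]_k) :
  compact X -> exists2 K, 0 <= K & forall x, X x -> sqnorm x <= K.
Proof.
move=> /compact_bounded [M0 [_ hM]]; set M := `|M0| + 1.
have XM x : X x -> `|x| <= M.
  by move=> Xx; apply: (hM M) => //; rewrite (le_lt_trans (ler_norm M0)) ?ltrDl.
exists (k%:R * M ^+ 2) => [|x Xx]; first by rewrite mulr_ge0 ?sqr_ge0.
rewrite mulr_natl -[k in _ *+ k]card_ord -sumr_const; apply: ler_sum => i _.
have xiM : `|x ord0 i| <= M.
  apply: le_trans (XM x Xx); rewrite (_ : `|x| = mx_norm x) // mx_normrE.
  exact: le_bigmax (ord0, i).
by rewrite -real_normK ?num_real // lerXn2r ?nnegrE // (le_trans _ xiM).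
Qed.

End SquaredNorm.

Section Coordinates.
Variables (R : realType) (n : nat).
Implicit Types (y : 'rV[R]_n) (u r : R) (z : 'rV[R]_(n + 1 + 1)).

Definition yur y u r : 'rV[R]_(n + 1 + 1) := row_mx (row_mx y (const_mx u)) (const_mx r).
Definition ycoord z : 'rV[R]_n := lsubmx (lsubmx z).
Definition ucoord z : R := rsubmx (lsubmx z) ord0 ord0.
Definition rcoord z : R := rsubmx z ord0 ord0.

Lemma ycoord_yur y u r : ycoord (yur y u r) = y.
Proof. by rewrite /ycoord /yur !row_mxKl. Qed.

Lemma ucoord_yur y u r : ucoord (yur y u r) = u.
Proof. by rewrite /ucoord /yur row_mxKl row_mxKr mxE. Qed.

Lemma rcoord_yur y u r : rcoord (yur y u r) = r.
Proof. by rewrite /rcoord /yur row_mxKr mxE. Qed.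

Lemma yur_coords z : yur (ycoord z) (ucoord z) (rcoord z) = z.
Proof.
rewrite -[RHS]hsubmxK -[lsubmx z]hsubmxK /yur.
by congr (row_mx (row_mx _ _) _); apply/matrixP => i j; rewrite !ord1 mxE.
Qed.

Lemma yur0 : yur 0 0 0 = 0.
Proof. by rewrite /yur !row_mx0. Qed.

Lemma yurB y u r y' u' r' : yur y u r - yur y' u' r' = yur (y - y') (u - u') (r - r').
Proof.
rewrite /yur !opp_row_mx !add_row_mx.
by congr (row_mx (row_mx _ _) _); apply/matrixP => i j; rewrite !mxE.
Qed.

Lemma sqnorm_yur y u r : sqnorm (yur y u r) = sqnorm y + u ^+ 2 + r ^+ 2.
Proof.
rewrite /sqnorm !big_split_ord /= !big_ord1 /yur row_mxEr row_mxEl row_mxEr !mxE.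
by congr (_ + _ + _); apply: eq_bigr => i _; rewrite !row_mxEl.
Qed.

End Coordinates.

Section SphericalCone.
Variables (R : realType) (n : nat) (X : set 'rV[R]_n).

Definition cone : set 'rV[R]_(n + 1 + 1) :=
  [set z | ucoord z != 0 -> X ((ucoord z)^-1 *: ycoord z)].

Definition spherical_cone : set 'rV[R]_(n + 1 + 1) :=
  sphere (yur 0 2^-1 0) 2^-1 `&` cone.

Lemma algebraic_set_cone : is_algebraic_set X -> is_algebraic_set cone.
Proof.
move=> /(algebraic_set_dehomogenized (fun i => lshift 1 (lshift 1 i))
                                     (lshift 1 (rshift n ord0))).
congr is_algebraic_set; apply: funext => z; rewrite /cone /ucoord /ycoord /= !mxE.
by congr (_ -> X _); apply/matrixP => i j; rewrite !mxE (ord1 i) mulrC.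
Qed.

Lemma algebraic_set_spherical_cone : is_algebraic_set X -> is_algebraic_set spherical_cone.
Proof.
by move=> hX; apply: algebraic_setI; [exact: algebraic_set_sphere | exact: algebraic_set_cone].
Qed.

Lemma spherical_cone0 : spherical_cone 0.
Proof.
split; last by rewrite /cone /= /ucoord !mxE eqxx.
rewrite sphereE /= -yur0 yurB sqnorm_yur subr0 /sqnorm big1 => [|i _].
  by rewrite add0r sub0r sqrrN subrr expr0n addr0.
by rewrite mxE expr0n.
Qed.

Definition link_height2 (a : R) (x : 'rV[R]_n) := a - a ^+ 2 - a ^+ 2 * sqnorm x.

Lemma sphere_spherical_coneE a z : 0 < a ->
  (sphere 0 (Num.sqrt a) `&` spherical_cone) z <->
  [/\ ucoord z = a, X (a^-1 *: ycoord z) &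
      rcoord z ^+ 2 = link_height2 a (a^-1 *: ycoord z)].
Proof.
move=> a0; rewrite /spherical_cone /cone !sphereE /= -[z]yur_coords subr0 yurB.
rewrite sqr_sqrtr ?ltW // !sqnorm_yur ycoord_yur ucoord_yur rcoord_yur !subr0.
move: (ycoord z) (ucoord z) (rcoord z) => y u r.
rewrite /link_height2 sqnormZ mulrA -exprMn (mulfV (lt0r_neq0 a0)) expr1n mul1r.
split=> [[h1 [h2 hX]]|[-> hX hr]].
  have ua : u = a by nra.
  rewrite ua in h1 hX.
  by split=> //; [apply: hX; exact: lt0r_neq0 | lra].
by split; [lra | split; [nra | move=> _]].
Qed.

End SphericalCone.

(* Global forms of the pointwise lemmas [continuousM], [continuous_max], ...: with the
   functions given explicitly, [apply] no longer has to solve the higher-order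
   unification problem [?s \* ?t = fun t => ...], which fails on composite terms. *)
Section Continuity.
Variables (R : realType) (T : topologicalType).
Implicit Types f g : T -> R.

Lemma continuous_sub f g : continuous f -> continuous g -> continuous (fun t => f t - g t).
Proof. by move=> cf cg t; exact: (continuousB (cf t) (cg t)). Qed.

Lemma continuous_mul f g : continuous f -> continuous g -> continuous (fun t => f t * g t).
Proof. by move=> cf cg t; exact: (continuousM (cf t) (cg t)). Qed.

Lemma continuous_maxr f g :
  continuous f -> continuous g -> continuous (fun t => Num.max (f t) (g t)).
Proof. by move=> cf cg t; exact: (continuous_max (cf t) (cg t)). Qed.

Lemma continuous_minr f g :
  continuous f -> continuous g -> continuous (fun t => Num.min (f t) (g t)).
Proof. by move=> cf cg t; exact: (continuous_min (cf t) (cg t)). Qed.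

Lemma continuous_sqrt f : continuous f -> continuous (fun t => Num.sqrt (f t)).
Proof. by move=> cf t; apply: continuous_comp; [exact: cf | exact: sqrt_continuous]. Qed.

Lemma continuous_mx_entries m k (F : T -> 'M[R]_(m, k)) :
  (forall i j, continuous (fun t => F t i j)) -> continuous F.
Proof.
move=> cF t; apply/cvg_mx_entourageP => A entA.
apply: filter_forall => i; apply: filter_forall => j.
have near_ij := cvg_entourage (cF i j t) entA.
rewrite near_simpl; near=> s; rewrite inE; near: s; exact: near_ij.
Unshelve. all: by end_near.
Qed.

Lemma continuous_entry m k (F : T -> 'M[R]_(m, k)) i j :
  continuous F -> continuous (fun t => F t i j).
Proof.
move=> cF t; apply: (@continuous_comp _ _ _ F (fun M => M i j)); first exact: cF.
exact: coord_continuous.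
Qed.

Lemma continuous_scale m k (c : R) (F : T -> 'M[R]_(m, k)) :
  continuous F -> continuous (fun t => c *: F t).
Proof. by move=> cF t; apply: continuousZ; [exact: cst_continuous | exact: cF]. Qed.

Lemma continuous_const_mx m k f :
  continuous f -> continuous (fun t => const_mx (f t) : 'M[R]_(m, k)).
Proof.
by move=> cf; apply: continuous_mx_entries => i j; under eq_fun do rewrite mxE.
Qed.

Lemma continuous_row_mx m k1 k2 (A : T -> 'M[R]_(m, k1)) (B : T -> 'M[R]_(m, k2)) :
  continuous A -> continuous B -> continuous (fun t => row_mx (A t) (B t)).
Proof.
move=> cA cB; apply: continuous_mx_entries => i j.
rewrite -(splitK j); case: (fintype.split j) => l.
  by under eq_fun do rewrite row_mxEl; exact: continuous_entry.
by under eq_fun do rewrite row_mxEr; exact: continuous_entry.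
Qed.

Lemma continuous_yur n (Y : T -> 'rV[R]_n) f g :
  continuous Y -> continuous f -> continuous g ->
  continuous (fun t => yur (Y t) (f t) (g t)).
Proof.
move=> cY cf cg; apply: continuous_row_mx; last exact: continuous_const_mx.
by apply: continuous_row_mx => //; exact: continuous_const_mx.
Qed.

End Continuity.

Section Ramp.
Variable R : realType.

Definition ramp (a r : R) := (1 - Num.max (-1) (Num.min 1 (r / a))) / 2.

Lemma continuous_ramp a : continuous (ramp a).
Proof.
apply: continuous_mul; last exact: cst_continuous.
apply: continuous_sub; first exact: cst_continuous.
apply: continuous_maxr; first exact: cst_continuous.
apply: continuous_minr; first exact: cst_continuous.
by apply: (continuous_mul (T := R)) => [r|]; [exact: cvg_id | exact: cst_continuous].
Qed.

Lemma ramp_ge a r : 0 < a -> a <= r -> ramp a r = 0.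
Proof.
move=> a0 ar; have r1 : 1 <= r / a by rewrite ler_pdivlMr // mul1r.
by rewrite /ramp min_l // max_r ?lerN10 // subrr mul0r.
Qed.

Lemma ramp_le a r : 0 < a -> r <= - a -> ramp a r = 1.
Proof.
move=> a0 ra; have r1 : r / a <= -1 by rewrite ler_pdivrMr // mulN1r.
rewrite /ramp min_r ?(le_trans r1) ?lerN10 // max_l // opprK.
by rewrite -[1 + 1]/2%:R divff // pnatr_eq0.
Qed.

End Ramp.

Lemma disjoint_union_selfE (R : realType) n (X : set 'rV[R]_n) (z : 'rV[R]_(n + 1)) :
  disjoint_union_self X z <->
  X (lsubmx z) /\ (rsubmx z ord0 ord0 = 0 \/ rsubmx z ord0 ord0 = 1).
Proof.
have rz : rsubmx z = const_mx (rsubmx z ord0 ord0).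
  by apply/matrixP => i j; rewrite (ord1 i) (ord1 j) !mxE.
rewrite /disjoint_union_self /=; split=> [[Xz [|]] | [Xz [|]]] hz; split=> //.
- by left; rewrite hz mxE.
- by right; rewrite hz mxE.
- by left; rewrite rz hz; apply/matrixP => i j; rewrite !mxE.
- by right; rewrite rz hz.
Qed.

Section Link.
Variables (R : realType) (n : nat) (X : set 'rV[R]_n) (K a : R).
Hypotheses (XK : forall x, X x -> sqnorm x <= K) (a0 : 0 < a) (aK : a * (K + 2) <= 1).

Let L := sphere 0 (Num.sqrt a) `&` spherical_cone X.

Lemma link_height2_ge x : X x -> a ^+ 2 <= link_height2 a x.
Proof.
move=> /XK xK; rewrite /link_height2.
have h1 : 0 <= a * (1 - a * (K + 2)).
  by apply: mulr_ge0; [exact: ltW | rewrite subr_ge0].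
have h2 : 0 <= a ^+ 2 * (K - sqnorm x).
  by apply: mulr_ge0; [exact: sqr_ge0 | rewrite subr_ge0].
nra.
Qed.

Lemma le_sqrt_link_height2 x : X x -> a <= Num.sqrt (link_height2 a x).
Proof.
move=> Xx; rewrite -[leLHS](ger0_norm (ltW a0)) -sqrtr_sqr ler_sqrt ?link_height2_ge //.
exact: le_trans (sqr_ge0 a) (link_height2_ge Xx).
Qed.

Lemma link_rcoord w : L w -> a <= rcoord w \/ rcoord w <= - a.
Proof.
move=> /(sphere_spherical_coneE X _ a0) [_ Xw hw].
have : a ^+ 2 <= `|rcoord w| ^+ 2.
  by rewrite real_normK ?num_real // hw; exact: link_height2_ge.
rewrite ler_pXn2r ?nnegrE ?normr_ge0 ?(ltW a0) // ler_normr.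
by case/orP => h; [left | right; rewrite lerNr].
Qed.

Definition to_link (z : 'rV[R]_(n + 1)) : 'rV[R]_(n + 1 + 1) :=
  yur (a *: lsubmx z) a
      ((1 - 2 * rsubmx z ord0 ord0) * Num.sqrt (link_height2 a (lsubmx z))).

Definition of_link (w : 'rV[R]_(n + 1 + 1)) : 'rV[R]_(n + 1) :=
  row_mx (a^-1 *: ycoord w) (const_mx (ramp a (rcoord w))).

Lemma to_link_in z : disjoint_union_self X z -> L (to_link z).
Proof.
move=> /disjoint_union_selfE [Xz hb]; apply/(sphere_spherical_coneE X _ a0).
rewrite ycoord_yur ucoord_yur rcoord_yur scalerA (mulVf (lt0r_neq0 a0)) scale1r.
split=> //; rewrite exprMn sqr_sqrtr.
  by case: hb => ->; rewrite ?mulr0 ?mulr1 ?subr0; ring.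
exact: le_trans (sqr_ge0 a) (link_height2_ge Xz).
Qed.

Lemma of_link_in w : L w -> disjoint_union_self X (of_link w).
Proof.
move=> Lw; have [_ Xw _] := (sphere_spherical_coneE X _ a0).1 Lw.
apply/disjoint_union_selfE; rewrite /of_link row_mxKl row_mxKr mxE; split=> //.
by case: (link_rcoord Lw) => hr; [left; exact: ramp_ge | right; exact: ramp_le].
Qed.

Lemma of_to_link z : disjoint_union_self X z -> of_link (to_link z) = z.
Proof.
move=> /disjoint_union_selfE [Xz hb]; have ha := le_sqrt_link_height2 Xz.
rewrite /of_link ycoord_yur rcoord_yur scalerA (mulVf (lt0r_neq0 a0)) scale1r.
rewrite -[RHS]hsubmxK; congr row_mx.
have -> : ramp a ((1 - 2 * rsubmx z ord0 ord0) * Num.sqrt (link_height2 a (lsubmx z))) =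
    rsubmx z ord0 ord0.
  case: hb => ->; first by rewrite mulr0 subr0 mul1r ramp_ge.
  by rewrite ramp_le // mulr1 (_ : 1 - 2 = -1 :> R) ?mulN1r ?lerN2 //; lra.
by apply/matrixP => i j; rewrite (ord1 i) (ord1 j) mxE.
Qed.

Lemma to_of_link w : L w -> to_link (of_link w) = w.
Proof.
move=> Lw; have [ua _ hw] := (sphere_spherical_coneE X _ a0).1 Lw.
rewrite /to_link /of_link row_mxKl row_mxKr mxE -hw sqrtr_sqr.
rewrite scalerA (mulfV (lt0r_neq0 a0)) scale1r -[RHS]yur_coords ua; congr yur.
case: (link_rcoord Lw) => hr.
  by rewrite ramp_ge // mulr0 subr0 mul1r ger0_norm // (le_trans (ltW a0)).
rewrite ramp_le // ltr0_norm; first ring.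
by rewrite (le_lt_trans hr) // oppr_lt0.
Qed.

Lemma continuous_to_link : continuous to_link.
Proof.
apply: continuous_yur; first by apply: continuous_scale; exact: continuous_lsubmx.
  exact: cst_continuous.
apply: continuous_mul.
  apply: continuous_sub; first exact: cst_continuous.
  apply: continuous_mul; first exact: cst_continuous.
  by apply: continuous_entry; exact: continuous_rsubmx.
apply: continuous_sqrt; apply: continuous_sub; first exact: cst_continuous.
apply: continuous_mul; first exact: cst_continuous.
move=> z; apply: continuous_comp; first exact: continuous_lsubmx.
exact: continuous_sqnorm.
Qed.

Lemma continuous_of_link : continuous of_link.
Proof.
have cY : continuous (@ycoord R n).
  by move=> w; apply: continuous_comp; apply: continuous_lsubmx.
apply: continuous_row_mx; first exact: continuous_scale.
apply: continuous_const_mx => w; apply: continuous_comp; last exact: continuous_ramp.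
by apply: continuous_entry; exact: continuous_rsubmx.
Qed.

Lemma homeomorphic_disjoint_union_link : homeomorphic (disjoint_union_self X) L.
Proof.
exists to_link, of_link; split; first split.
- exact: to_link_in.
- exact: of_link_in.
- exact: of_to_link.
- exact: to_of_link.
split; apply: continuous_subspaceT.
  exact: continuous_to_link.
exact: continuous_of_link.
Qed.

End Link.

Theorem proposition4p1 (R : realType) (n : nat) (X : set 'rV[R]_n) :
  is_algebraic_set X -> compact X -> is_boundary (disjoint_union_self X).
Proof.
move=> hX /compact_sqnorm_bounded [K K0 XK].
exists (n + 1 + 1)%N, (spherical_cone X), 0; split.
- exact: algebraic_set_spherical_cone.
- exact: spherical_cone0.
have K2 : 0 < K + 2 by lra.
exists (K + 2)^-1 => [|eps eps0 epsK]; first by rewrite invr_gt0.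
have epsK1 : eps * (K + 2) < 1 by rewrite -ltr_pdivlMr // div1r.
have eps1 : eps <= 1.
  by apply: le_trans (ltW epsK1); rewrite ler_peMr ?ltW //; lra.
have aK : eps ^+ 2 * (K + 2) <= 1.
  rewrite expr2 -mulrA; apply: mulr_ile1 => //; try exact: ltW.
  by apply: mulr_ge0; exact: ltW.
have := homeomorphic_disjoint_union_link XK (exprn_gt0 2 eps0) aK.
by rewrite sqrtr_sqr ger0_norm ?ltW.
Qed.
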